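(* Let $A$ be a metabelian Lie algebra over a field $k$. Then $A$ is a $U$-algebra if and only if every finitely generated subalgebra of $A$ is a $U$-algebra.
   Context: A Lie algebra is metabelian if $(a\circ b)\circ(c\circ d)=0$ identically; $A^2$ is the ideal spanned by all products; $\mathrm{Fit}(A)$ is the ideal generated by all elements lying in nilpotent ideals of $A$. If $\mathrm{Fit}(A)$ is abelian, choose $\{a_\alpha:\alpha\in\Lambda\}\subseteq A$ whose images form a basis of $A/\mathrm{Fit}(A)$ and let $R=k[x_\alpha:\alpha\in\Lambda]$; then $\mathrm{Fit}(A)$ is an $R$-module via $b\cdot x_\alpha=b\circ a_\alpha$, extended multiplicatively and linearly (torsion-freeness does not depend on the choice). $A$ is a (metabelian Lie) $U$-algebra if $\mathrm{Fit}(A)$ is abelian and is a torsion-free $R$-module. *)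

From HB Require Import structures.
From mathcomp Require Import all_boot all_order all_algebra.
From mathcomp Require Import mpoly.
Set Implicit Arguments. Unset Strict Implicit. Unset Printing Implicit Defensive.
Import GRing.Theory.
Local Open Scope ring_scope.

(* All notions below are relative to a subalgebra S : A -> Prop of A, regarded
   as a Lie algebra in its own right (with S = everything for A itself). *)
Section LieDefs.
Variables (k : fieldType) (A : lmodType k) (br : A -> A -> A).

Definition is_lie_algebra : Prop :=
  [/\ (forall y, linear (br ^~ y)), (forall x, linear (br x)),
      (forall x, br x x = 0) &
      (forall x y z, br x (br y z) + br y (br z x) + br z (br x y) = 0)].

Definition metabelian : Prop :=
  forall a b c d, br (br a b) (br c d) = 0.

Definition subspace (V : A -> Prop) : Prop :=
  [/\ V 0, (forall x y, V x -> V y -> V (x + y)) & (forall c x, V x -> V (c *: x))].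

Definition subalgebra (S : A -> Prop) : Prop :=
  subspace S /\ (forall x y, S x -> S y -> S (br x y)).

Definition gen_subalgebra (s : seq A) : A -> Prop :=
  fun x => forall W, subalgebra W -> (forall y, y \in s -> W y) -> W x.

Definition prod_span (U V : A -> Prop) : A -> Prop :=
  fun x => forall W, subspace W -> (forall u v, U u -> V v -> W (br u v)) -> W x.

Definition ideal (S I : A -> Prop) : Prop :=
  [/\ (forall x, I x -> S x), subspace I &
      (forall x y, I x -> S y -> I (br x y) /\ I (br y x))].

Fixpoint lpow (I : A -> Prop) (n : nat) : A -> Prop :=
  match n with
  | 0 | 1 => I
  | m.+1 => prod_span (lpow I m) I
  end.

Definition nilpotent (I : A -> Prop) : Prop :=
  exists n, forall x, lpow I n x -> x = 0.

Definition Fit (S : A -> Prop) : A -> Prop :=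
  fun x => forall J, ideal S J ->
    (forall y, (exists I, [/\ ideal S I, nilpotent I & I y]) -> J y) -> J x.

Definition Fit_abelian (S : A -> Prop) : Prop :=
  forall x y, Fit S x -> Fit S y -> br x y = 0.

(* T is a set of representatives whose images form a basis of S / Fit(S) *)
Definition basis_mod_Fit (S T : A -> Prop) : Prop :=
  [/\ (forall t, T t -> S t),
      (forall n (a : 'I_n -> A) (c : 'I_n -> k), injective a ->
         (forall i, T (a i)) -> Fit S (\sum_i c i *: a i) -> forall i, c i = 0) &
      (forall x, S x -> exists n (a : 'I_n -> A) (c : 'I_n -> k),
         (forall i, T (a i)) /\ Fit S (x - \sum_i c i *: a i))].

(* action of the monomial x_{a 0}^{m 0} ... x_{a (n-1)}^{m (n-1)} on b *)
Definition mon_act n (a : 'I_n -> A) (m : 'X_{1..n}) (b : A) : A :=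
  foldr (fun i y => iter (m i) (fun z => br z (a i)) y) b (enum 'I_n).

Definition poly_act n (a : 'I_n -> A) (p : {mpoly k[n]}) (b : A) : A :=
  \sum_(m <- msupp p) p@_m *: mon_act a m b.

(* Fit(S) is a torsion-free module over R = k[x_t : t in T]; every nonzero
   element of R is a nonzero polynomial in finitely many distinct variables. *)
Definition torsion_free (S T : A -> Prop) : Prop :=
  forall n (a : 'I_n -> A), injective a -> (forall i, T (a i)) ->
  forall p : {mpoly k[n]}, p != 0 ->
  forall b, Fit S b -> b <> 0 -> poly_act a p b <> 0.

Definition U_algebra (S : A -> Prop) : Prop :=
  Fit_abelian S /\ exists T, basis_mod_Fit S T /\ torsion_free S T.

End LieDefs.

From mathcomp Require Import all_boot all_order all_algebra.
From mathcomp Require Import mpoly ssrcomplements.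
From mathcomp Require classical_sets.
From Stdlib Require Import Classical.
Set Implicit Arguments. Unset Strict Implicit. Unset Printing Implicit Defensive.
Import GRing.Theory.
Local Open Scope ring_scope.

(* Torsion-freeness with respect to one basis
   modulo Fit transfers, by an invertible linear change of variables, to every
   family independent modulo Fit; in particular an element outside Fit acts
   injectively on Fit.  And since A is metabelian, all products lie in Fit.
   If A is a U-algebra and B a nonabelian subalgebra with [u, v] <> 0, an
   element y of a nilpotent ideal of B cannot lie outside Fit(A): it would act
   injectively on Fit(A), yet nilpotence makes its iterated action on [[u, v], y]
   vanish.  Hence Fit(B) is the intersection of B with Fit(A), and B inherits
   the U-property.  Conversely, if every finitely generated subalgebra
   is a U-algebra and [u0, v0] <> 0, then Fit(A) is the annihilator of A^2:
   both memberships can be tested inside a finitely generated subalgebra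
   containing u0, v0 and the elements involved. *)

Section Bracket.
Variables (k : fieldType) (A : lmodType k) (br : A -> A -> A).
Hypothesis lieA : is_lie_algebra br.

Lemma brDl x y z : br (x + y) z = br x z + br y z.
Proof. by case: lieA => linl _ _ _; have := linl z 1 x y; rewrite /= !scale1r. Qed.

Lemma brDr x y z : br z (x + y) = br z x + br z y.
Proof. by case: lieA => _ linr _ _; have := linr z 1 x y; rewrite /= !scale1r. Qed.

Lemma br0l z : br 0 z = 0.
Proof. by apply: (addrI (br 0 z)); rewrite -brDl !addr0. Qed.

Lemma br0r z : br z 0 = 0.
Proof. by apply: (addrI (br z 0)); rewrite -brDr !addr0. Qed.

Lemma brZl c x z : br (c *: x) z = c *: br x z.
Proof. by case: lieA => linl _ _ _; have := linl z c x 0; rewrite /= !addr0 br0l addr0. Qed.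

Lemma brZr c x z : br z (c *: x) = c *: br z x.
Proof. by case: lieA => _ linr _ _; have := linr z c x 0; rewrite /= !addr0 br0r addr0. Qed.

Lemma brNl x z : br (- x) z = - br x z.
Proof. by rewrite -scaleN1r brZl scaleN1r. Qed.

Lemma brNr x z : br z (- x) = - br z x.
Proof. by rewrite -scaleN1r brZr scaleN1r. Qed.

Lemma brBr x y z : br z (x - y) = br z x - br z y.
Proof. by rewrite brDr brNr. Qed.

Lemma brC x y : br x y = - br y x.
Proof.
case: lieA => _ _ brxx _; have := brxx (x + y).
by rewrite brDl !brDr !brxx add0r addr0 => /eqP; rewrite addr_eq0 => /eqP.
Qed.

Lemma br_sumr (I : Type) (r : seq I) (P : pred I) (F : I -> A) z :
  br z (\sum_(i <- r | P i) F i) = \sum_(i <- r | P i) br z (F i).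
Proof. by apply: (big_morph (br z)); [move=> x y; exact: brDr | exact: br0r]. Qed.

Lemma br_swap y u v : br y (br u v) = 0 -> br (br y u) v = br (br y v) u.
Proof.
case: lieA => _ _ _ jacobi yuv0; have := jacobi y u v.
rewrite yuv0 add0r [br u _]brC [br v y]brC brNl opprK [br v _]brC.
by move/eqP; rewrite subr_eq0 => /eqP.
Qed.

End Bracket.

Section Subspace.
Variables (k : fieldType) (A : lmodType k) (V : A -> Prop).
Hypothesis subV : subspace V.

Lemma subspace0 : V 0. Proof. by case: subV. Qed.

Lemma subspaceD x y : V x -> V y -> V (x + y). Proof. by case: subV => _ + _; apply. Qed.

Lemma subspaceZ c x : V x -> V (c *: x). Proof. by case: subV => _ _; apply. Qed.

Lemma subspace_sum (I : Type) (r : seq I) (P : pred I) (F : I -> A) :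
  (forall i, P i -> V (F i)) -> V (\sum_(i <- r | P i) F i).
Proof. by move=> VF; apply: big_ind => //; [exact: subspace0 | exact: subspaceD]. Qed.

Lemma subspace_lin (I : finType) (c : I -> k) (F : I -> A) :
  (forall i, V (F i)) -> V (\sum_i c i *: F i).
Proof. by move=> VF; apply: subspace_sum => i _; apply: subspaceZ. Qed.

End Subspace.

Section Subalgebras.
Variables (k : fieldType) (A : lmodType k) (br : A -> A -> A).
Hypothesis lieA : is_lie_algebra br.

Lemma zero_subspace : subspace (fun x : A => x = 0).
Proof. by split => // [x y -> ->|c x ->]; rewrite ?addr0 ?scaler0. Qed.

Lemma prod_span_subspace U V : subspace (prod_span br U V).
Proof.
split; first by move=> W [].
- by move=> x y hx hy W subW h; apply: subspaceD => //; [apply: hx | apply: hy].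
- by move=> c x hx W subW h; apply: subspaceZ => //; apply: hx.
Qed.

Lemma prod_span_br (U V : A -> Prop) u v : U u -> V v -> prod_span br U V (br u v).
Proof. by move=> Uu Vv W _; apply. Qed.

Lemma prod_span_sub (U U' V V' : A -> Prop) :
  (forall x, U x -> U' x) -> (forall x, V x -> V' x) ->
  forall x, prod_span br U V x -> prod_span br U' V' x.
Proof. by move=> UU' VV' x hx W subW h; apply: hx => // u v /UU' + /VV'; apply: h. Qed.

Lemma lpow_sub (I J : A -> Prop) : (forall x, I x -> J x) ->
  forall n x, lpow br I n x -> lpow br J n x.
Proof. by move=> IJ; elim=> [|[|n] IHn] //= x; apply: prod_span_sub. Qed.

Lemma nilpotent_sub (I J : A -> Prop) : (forall x, J x -> I x) ->
  nilpotent br I -> nilpotent br J.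
Proof. by move=> JI [n In0]; exists n => x /(lpow_sub JI) /In0. Qed.

Lemma abelian_nilpotent (I : A -> Prop) :
  (forall x y, I x -> I y -> br x y = 0) -> nilpotent br I.
Proof. by move=> abI; exists 2 => x /= /(_ _ zero_subspace); apply. Qed.

Lemma subalgebraT : subalgebra br (fun _ => True).
Proof. by []. Qed.

Lemma gen_subalgebra_subalgebra s : subalgebra br (gen_subalgebra br s).
Proof.
split; first split.
- by move=> W [[]].
- move=> x y hx hy W algW h; case: (algW) => subW _.
  by apply: subspaceD => //; [apply: hx | apply: hy].
- by move=> c x hx W algW h; case: (algW) => subW _; apply: subspaceZ => //; apply: hx.
- by move=> x y hx hy W algW h; case: (algW) => _ brW; apply: brW; [apply: hx | apply: hy].
Qed.

Lemma gen_subalgebra_mem s x : x \in s -> gen_subalgebra br s x.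
Proof. by move=> xs W _; apply. Qed.

Lemma gen_subalgebra_sub s s' : {subset s <= s'} ->
  forall x, gen_subalgebra br s x -> gen_subalgebra br s' x.
Proof.
move=> ss' x; apply; first exact: gen_subalgebra_subalgebra.
by move=> y /ss'; apply: gen_subalgebra_mem.
Qed.

Lemma idealI (S I : A -> Prop) : subalgebra br S -> ideal br (fun _ => True) I ->
  ideal br S (fun y => S y /\ I y).
Proof.
move=> [subS brS] [_ subI brI]; split; first by move=> x [].
- split; first by split; apply: subspace0.
  + by move=> x y [Sx Ix] [Sy Iy]; split; apply: subspaceD.
  + by move=> c x [Sx Ix]; split; apply: subspaceZ.
- by move=> x y [Sx Ix] Sy; have [Ixy Iyx] := brI x y Ix Logic.I; split; split => //; exact: brS.
Qed.

Section Fitting.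
Variable S : A -> Prop.
Hypothesis subalgS : subalgebra br S.

Lemma ideal_self : ideal br S S.
Proof. by case: subalgS => subS brS; split => // x y Sx Sy; split; apply: brS. Qed.

Lemma Fit_ideal : ideal br S (Fit br S).
Proof.
split.
- by move=> x; apply; [exact: ideal_self | move=> y [I [[IS _ _] _]]; apply: IS].
- split; first by move=> J [_ []].
  + move=> x y hx hy J idJ h; case: (idJ) => _ subJ _.
    by apply: subspaceD => //; [exact: hx | exact: hy].
  + by move=> c x hx J idJ h; case: (idJ) => _ subJ _; apply: subspaceZ => //; exact: hx.
- by move=> x y hx Sy; split=> J idJ h; case: (idJ) => _ _ /(_ x y (hx J idJ h) Sy) [].
Qed.

Lemma Fit_sub x : Fit br S x -> S x.
Proof. by case: Fit_ideal => + _ _; apply. Qed.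

Lemma Fit_subspace : subspace (Fit br S).
Proof. by case: Fit_ideal. Qed.

Lemma Fit_brl x y : Fit br S x -> S y -> Fit br S (br x y).
Proof. by case: Fit_ideal => _ _ brF Fx Sy; case: (brF x y Fx Sy). Qed.

Lemma Fit_nilpotent (I : A -> Prop) y :
  ideal br S I -> nilpotent br I -> I y -> Fit br S y.
Proof. by move=> idI nilI Iy J _; apply; exists I. Qed.

Lemma Fit_min (J : A -> Prop) : ideal br S J ->
  (forall I, ideal br S I -> nilpotent br I -> forall y, I y -> J y) ->
  forall x, Fit br S x -> J x.
Proof. by move=> idJ nilJ x; apply=> // y [I [idI nilI Iy]]; exact: nilJ nilI _ Iy. Qed.

Lemma nilpotent_iter_br (I : A -> Prop) y z : ideal br S I -> nilpotent br I ->
  I y -> S z -> exists m, iter m (fun w => br w y) (br z y) = 0.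
Proof.
move=> [_ _ brI] [n In0] Iy Sz; exists n.
have lpow_iter m : lpow br I m.+1 (iter m (fun w => br w y) (br z y)).
  by elim: m => [|m IHm] /=; [case: (brI y z Iy Sz) | exact: prod_span_br].
case: n In0 (lpow_iter n) => [|n] In0; first exact: In0.
by move/(_ _ zero_subspace); apply=> u v /In0 -> _; rewrite (br0l lieA).
Qed.

End Fitting.
End Subalgebras.

Section Metabelian.
Variables (k : fieldType) (A : lmodType k) (br : A -> A -> A).
Hypotheses (lieA : is_lie_algebra br) (metaA : metabelian br).

Lemma br_prod_span0 U V U' V' x y :
  prod_span br U V x -> prod_span br U' V' y -> br x y = 0.
Proof.
move=> hx hy; pose W x := br x y = 0.
have subW : subspace W.
  split=> [|x1 x2|c x1]; rewrite /W ?(br0l lieA) ?(brDl lieA) ?(brZl lieA) //.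
    by move=> -> ->; rewrite addr0.
  by move=> ->; rewrite scaler0.
apply: (hx W subW) => u v _ _; rewrite /W.
apply: (hy (fun y => br (br u v) y = 0)) => [|? ? _ _]; last exact: metaA.
split=> [|y1 y2|c y1]; rewrite ?(br0r lieA) ?(brDr lieA) ?(brZr lieA) //.
  by move=> -> ->; rewrite addr0.
by move=> ->; rewrite scaler0.
Qed.

Lemma Fit_br (S : A -> Prop) u v : subalgebra br S -> S u -> S v -> Fit br S (br u v).
Proof.
move=> [subS brS] Su Sv; apply: (@Fit_nilpotent _ _ _ _ (prod_span br S S)).
- have SS x : prod_span br S S x -> S x by apply.
  split=> //; first exact: prod_span_subspace.
  by move=> x y Sx Sy; split; apply: prod_span_br => //; apply: SS.
- by apply: abelian_nilpotent => x y; apply: br_prod_span0.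
- exact: prod_span_br.
Qed.

End Metabelian.

Section PolyAction.
Variables (k : fieldType) (A : lmodType k) (br : A -> A -> A).
Variables (n : nat) (a : 'I_n -> A).

Lemma mon_act0 b : mon_act br a 0%MM b = b.
Proof. by rewrite /mon_act; elim: (enum 'I_n) => //= j s ->; rewrite mnm0E. Qed.

Lemma poly_act_msize (K : nat) (p : {mpoly k[n]}) b : (msize p <= K)%N ->
  poly_act br a p b = \sum_(m : 'X_{1..n < K}) p@_m *: mon_act br a m b.
Proof.
move=> szpK; pose I : subFinType _ := 'X_{1..n < K}.
rewrite /poly_act (big_mksub I) /=; last 2 first.
- exact: msupp_uniq.
- by move=> m /msize_mdeg_lt /leq_trans; apply.
by rewrite big_rmcond //= => m /memN_msupp_eq0 ->; rewrite scale0r.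
Qed.

Lemma poly_actDZ c p q b :
  poly_act br a (c *: p + q) b = c *: poly_act br a p b + poly_act br a q b.
Proof.
pose K := maxn (msize (c *: p + q)) (maxn (msize p) (msize q)).
rewrite !(@poly_act_msize K) ?leq_maxl //; last 2 first.
- by rewrite (leq_trans (leq_maxr _ _) (leq_maxr _ _)).
- by rewrite (leq_trans (leq_maxl _ _) (leq_maxr _ _)).
rewrite scaler_sumr -big_split; apply: eq_bigr => m _.
by rewrite mcoeffD mcoeffZ scalerDl scalerA.
Qed.

Lemma poly_act0 b : poly_act br a 0 b = 0.
Proof. by rewrite /poly_act msupp0 big_nil. Qed.

Lemma poly_actD p q b : poly_act br a (p + q) b = poly_act br a p b + poly_act br a q b.
Proof. by have := poly_actDZ 1 p q b; rewrite !scale1r. Qed.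

Lemma poly_actZ c p b : poly_act br a (c *: p) b = c *: poly_act br a p b.
Proof. by rewrite -[c *: p]addr0 poly_actDZ poly_act0 addr0. Qed.

Lemma poly_act_sum (I : Type) (r : seq I) (P : pred I) (F : I -> {mpoly k[n]}) b :
  poly_act br a (\sum_(i <- r | P i) F i) b = \sum_(i <- r | P i) poly_act br a (F i) b.
Proof.
by apply: (big_morph (poly_act br a ^~ b)); [move=> p q; exact: poly_actD | exact: poly_act0].
Qed.

Lemma poly_actX m b : poly_act br a 'X_[m] b = mon_act br a m b.
Proof. by rewrite /poly_act msuppX big_seq1 mcoeffX eqxx scale1r. Qed.

Lemma poly_act1 b : poly_act br a 1 b = b.
Proof. by rewrite -mpolyX0 poly_actX mon_act0. Qed.

End PolyAction.

Section FitAction.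
Variables (k : fieldType) (A : lmodType k) (br : A -> A -> A).
Hypotheses (lieA : is_lie_algebra br) (metaA : metabelian br).
Variable S : A -> Prop.
Hypotheses (subalgS : subalgebra br S) (FitS_ab : Fit_abelian br S).
Variables (n : nat) (a : 'I_n -> A).
Hypothesis Sa : forall i, S (a i).

Local Notation F := (Fit br S).
Local Notation act i := (fun z => br z (a i)).
Local Notation mon_step m := (fun i y => iter (m i) (act i) y).

(* The operators [act i] commute on Fit S because [br (a i) (a j)] lies in the
   abelian ideal Fit S. *)
Lemma act_comm i j z : F z -> act i (act j z) = act j (act i z).
Proof.
by move=> Fz; apply: br_swap => //; apply: FitS_ab => //; exact: Fit_br.
Qed.

Lemma Fit_iter_act i e z : F z -> F (iter e (act i) z).
Proof. by move=> Fz; elim: e => //= e IHe; apply: Fit_brl. Qed.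

Lemma iter_act_comm i j e z : F z -> iter e (act i) (act j z) = act j (iter e (act i) z).
Proof. by move=> Fz; elim: e => //= e ->; apply: act_comm; apply: Fit_iter_act. Qed.

Lemma Fit_foldr_mon m s z : F z -> F (foldr (mon_step m) z s).
Proof. by move=> Fz; elim: s => //= j s IHs; apply: Fit_iter_act. Qed.

Lemma foldr_monU m i s z : uniq s -> F z ->
  foldr (mon_step (U_(i) + m)%MM) z s =
  if i \in s then act i (foldr (mon_step m) z s) else foldr (mon_step m) z s.
Proof.
move=> + Fz; elim: s => //= j s IHs /andP[js us]; rewrite in_cons IHs //.
rewrite mnmDE mnm1E; have [eij|nij] := eqVneq i j; first by subst j; rewrite /= (negbTE js).
rewrite add0n; case: (i \in s) => //.
by rewrite iter_act_comm //; apply: Fit_foldr_mon.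
Qed.

Lemma Fit_poly_act p b : F b -> F (poly_act br a p b).
Proof.
have subF := Fit_subspace subalgS.
by move=> Fb; apply: (subspace_sum subF) => m _; apply: (subspaceZ subF); apply: Fit_foldr_mon.
Qed.

Lemma poly_act_mulX i p b : F b -> poly_act br a ('X_i * p) b = act i (poly_act br a p b).
Proof.
move=> Fb; elim/mpolyind: p => [|c m p _ _ IHp]; first by rewrite mulr0 poly_act0 (br0l lieA).
rewrite mulrDr poly_actD IHp -scalerAr poly_actZ -mpolyXD !poly_actX.
rewrite /mon_act foldr_monU ?enum_uniq ?mem_enum //.
by rewrite poly_actD poly_actZ poly_actX (brDl lieA) (brZl lieA).
Qed.

Lemma poly_act_X i b : F b -> poly_act br a 'X_i b = br b (a i).
Proof. by move=> Fb; rewrite -['X_i]mulr1 poly_act_mulX // poly_act1. Qed.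

End FitAction.

Lemma mpoly_ind_mulX (R : comNzRingType) n (P : {mpoly R[n]} -> Prop) :
  P 1 -> (forall c p q, P p -> P q -> P (c *: p + q)) ->
  (forall i p, P p -> P ('X_i * p)) -> forall p, P p.
Proof.
move=> P1 PDZ PmulX.
have P0 : P 0 by have := PDZ (-1) 1 1 P1 P1; rewrite scaleN1r addNr.
have PmulXn i e q : P q -> P ('X_i ^+ e * q).
  by move=> Pq; elim: e => [|e IHe]; rewrite ?expr0 ?mul1r // exprS -mulrA; apply: PmulX.
have Pmon s (e : 'I_n -> nat) : P (\prod_(i <- s) 'X_i ^+ e i).
  by elim: s => [|i s IHs]; rewrite ?big_nil ?big_cons //; apply: PmulXn.
by elim/mpolyind => // c m p _ _ Pp; apply: PDZ => //; rewrite mpolyXE_id.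
Qed.

Section LinearSubstitution.
Variable K : fieldType.

Definition lin_subst n m (C : 'M[K]_(n, m)) : n.-tuple {mpoly K[m]} :=
  [tuple \sum_(j < m) C i j *: 'X_j | i < n].

Variables (n m : nat) (C : 'M[K]_(n, m)) (D : 'M[K]_(m, n)).
Hypothesis CD1 : C *m D = 1%:M.

Lemma lin_substK_X i : tnth (lin_subst C) i \mPo lin_subst D = 'X_i.
Proof.
rewrite tnth_mktuple raddf_sum /=.
under eq_bigr => j _ do
  rewrite comp_mpolyZ comp_mpolyXU -tnth_nth tnth_mktuple scaler_sumr.
have CDE l : \sum_j C i j *: (D j l *: 'X_l) = (i == l)%:R *: 'X_l :> {mpoly K[n]}.
  under eq_bigr => j _ do rewrite scalerA.
  by have := congr1 (fun M : 'M_n => M i l) CD1; rewrite !mxE -scaler_suml => ->.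
rewrite exchange_big /= (bigD1 i) //= CDE eqxx scale1r big1 ?addr0 // => l nil.
by rewrite CDE eq_sym (negbTE nil) scale0r.
Qed.

Lemma lin_substK p : (p \mPo lin_subst C) \mPo lin_subst D = p.
Proof.
elim/mpoly_ind_mulX: p => [|c p q IHp IHq|i p IHp]; first by rewrite !comp_mpoly1.
  by rewrite !comp_mpolyD !comp_mpolyZ IHp IHq.
by rewrite !rmorphM /= IHp comp_mpolyXU -tnth_nth lin_substK_X.
Qed.

Lemma lin_subst_eq0 p : p != 0 -> p \mPo lin_subst C != 0.
Proof. by apply: contraNN => /eqP pC0; rewrite -(lin_substK p) pC0 comp_mpoly0. Qed.

End LinearSubstitution.

Section SubstitutionAction.
Variables (k : fieldType) (A : lmodType k) (br : A -> A -> A).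
Hypotheses (lieA : is_lie_algebra br) (metaA : metabelian br).
Variable S : A -> Prop.
Hypotheses (subalgS : subalgebra br S) (FitS_ab : Fit_abelian br S).
Variables (n m : nat) (a : 'I_n -> A) (t : 'I_m -> A) (C : 'M[k]_(n, m)).
Hypotheses (Sa : forall i, S (a i)) (St : forall j, S (t j)).
Hypothesis a_tC : forall i, Fit br S (a i - \sum_j C i j *: t j).

(* Modulo the abelian ideal Fit S, [a i] acts on Fit S as [\sum_j C i j *: t j]. *)
Lemma poly_act_lin_subst p b : Fit br S b ->
  poly_act br t (p \mPo lin_subst C) b = poly_act br a p b.
Proof.
elim/mpoly_ind_mulX: p b => [|c p q IHp IHq|i p IHp] b Fb.
- by rewrite comp_mpoly1 !poly_act1.
- by rewrite comp_mpolyD comp_mpolyZ !poly_actDZ IHp ?IHq.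
rewrite rmorphM /= comp_mpolyXU -tnth_nth tnth_mktuple.
rewrite (poly_act_mulX lieA metaA subalgS FitS_ab Sa) // -IHp //.
rewrite mulr_suml poly_act_sum.
under eq_bigr => j _ do
  rewrite -scalerAl poly_actZ (poly_act_mulX lieA metaA subalgS FitS_ab St) //.
have : br (poly_act br t (p \mPo lin_subst C) b) (a i - \sum_j C i j *: t j) = 0.
  by apply: FitS_ab; [exact: Fit_poly_act | exact: a_tC].
rewrite (brBr lieA) (br_sumr lieA) => /eqP; rewrite subr_eq0 => /eqP ->.
by apply: eq_bigr => j _; rewrite (brZr lieA).
Qed.

End SubstitutionAction.

Section IndependenceModulo.
Variables (k : fieldType) (A : lmodType k).

Definition indep_mod (F : A -> Prop) n (a : 'I_n -> A) :=
  forall c : 'I_n -> k, F (\sum_i c i *: a i) -> forall i, c i = 0.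

Definition spans_mod (F T : A -> Prop) x := exists n (a : 'I_n -> A) (c : 'I_n -> k),
  (forall i, T (a i)) /\ F (x - \sum_i c i *: a i).

Lemma sum_scale_regroup (l : seq A) N (u : 'I_N -> A) (c : 'I_N -> k) :
  uniq l -> (forall i, u i \in l) ->
  \sum_i c i *: u i = \sum_(j < size l) (\sum_(i | u i == nth 0 l j) c i) *: nth 0 l j.
Proof.
move=> ul ul2; under [RHS]eq_bigr => j _ do rewrite scaler_suml big_mkcond /=.
rewrite exchange_big /=; apply: eq_bigr => i _.
have ltil : (index (u i) l < size l)%N by rewrite index_mem.
rewrite (bigD1 (Ordinal ltil)) //= nth_index // eqxx big1 ?addr0 // => j.
by case: ifP => // /eqP uij; rewrite -val_eqE /= uij index_uniq ?eqxx.
Qed.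

Lemma spans_mod_family (F T : A -> Prop) n (a : 'I_n -> A) :
  (forall i, spans_mod F T (a i)) ->
  exists m (t : 'I_m -> A) (C : 'M[k]_(n, m)),
    [/\ injective t, forall j, T (t j) & forall i, F (a i - \sum_j C i j *: t j)].
Proof.
move=> spa; have /fin_all_exists [fam famP] : forall i, exists uc :
    {N : nat & (('I_N -> A) * ('I_N -> k))%type},
    (forall j, T ((projT2 uc).1 j)) /\
    F (a i - \sum_j (projT2 uc).2 j *: (projT2 uc).1 j).
  by move=> i; have [N [u [c spi]]] := spa i; exists (existT _ N (u, c)).
pose u i := (projT2 (fam i)).1; pose c i := (projT2 (fam i)).2.
pose l := undup [seq u i j | i <- enum 'I_n, j <- enum 'I_(projT1 (fam i))].
have ul : uniq l := undup_uniq _.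
have ul2 i j : u i j \in l.
  by rewrite mem_undup; apply/allpairsPdep; exists i, j; rewrite !mem_enum.
exists (size l), (fun j => nth 0 l j).
exists (\matrix_(i, j) \sum_(kk | u i kk == nth 0 l j) c i kk); split.
- by move=> j1 j2 /eqP; rewrite nth_uniq // => /eqP /val_inj.
- move=> j; move: (mem_nth 0 (ltn_ord j)); rewrite mem_undup.
  by case/allpairsPdep=> [i [kk [_ _ ->]]]; case: (famP i) => + _; apply.
- move=> i; case: (famP i) => _; rewrite (sum_scale_regroup _ ul (ul2 i)) => Fi.
  by under eq_bigr => j _ do rewrite mxE; exact: Fi.
Qed.

Lemma indep_mod_row_free (F : A -> Prop) n m (a : 'I_n -> A) (t : 'I_m -> A)
    (C : 'M[k]_(n, m)) :
  subspace F -> indep_mod F a -> (forall i, F (a i - \sum_j C i j *: t j)) ->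
  row_free C.
Proof.
move=> subF inda a_tC; apply: inj_row_free => v vC0; apply/rowP => i0.
have vC0j j : \sum_i v 0 i * C i j = 0.
  by have := congr1 (fun M : 'rV[k]_m => M 0 j) vC0; rewrite !mxE.
rewrite mxE; apply: (inda (fun i => v 0 i)).
have -> : \sum_i v 0 i *: a i =
    \sum_i v 0 i *: (a i - \sum_j C i j *: t j) + \sum_j (\sum_i v 0 i * C i j) *: t j.
  have -> : \sum_j (\sum_i v 0 i * C i j) *: t j = \sum_i v 0 i *: \sum_j C i j *: t j.
    under eq_bigr => j _ do rewrite scaler_suml.
    rewrite exchange_big /=; apply: eq_bigr => i _; rewrite scaler_sumr.
    by apply: eq_bigr => j _; rewrite scalerA.
  by rewrite -big_split /=; apply: eq_bigr => i _; rewrite -scalerDr subrK.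
under [X in _ (_ + X)]eq_bigr => j _ do rewrite vC0j scale0r.
by rewrite big1_eq addr0; apply: subspace_lin.
Qed.

End IndependenceModulo.

Section BasisModulo.
Variables (k : fieldType) (A : lmodType k).

Definition indep_set (F T : A -> Prop) := forall n (a : 'I_n -> A) (c : 'I_n -> k),
  injective a -> (forall i, T (a i)) -> F (\sum_i c i *: a i) -> forall i, c i = 0.

Lemma chain_mem_seq (Fam : (A -> Prop) -> Prop) :
  (forall X Y, Fam X -> Fam Y -> (forall z, X z -> Y z) \/ (forall z, Y z -> X z)) ->
  forall s : seq A, s <> [::] -> (forall x, x \in s -> exists X, Fam X /\ X x) ->
  exists X, Fam X /\ forall x, x \in s -> X x.
Proof.
move=> chainF; elim=> // x s IHs _ sF.
have [X [FX Xx]] := sF x (mem_head _ _).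
case: s IHs sF => [|y s] IHs sF.
  by exists X; split => // z; rewrite inE => /eqP ->.
have [Y [FY Ys]] : exists Y, Fam Y /\ forall z, z \in y :: s -> Y z.
  by apply: IHs => // z zs; apply: sF; rewrite inE zs orbT.
case: (chainF _ _ FX FY) => XY.
  by exists Y; split => // z; rewrite inE => /orP [/eqP ->|]; [exact: XY | exact: Ys].
by exists X; split => // z; rewrite inE => /orP [/eqP -> //|/Ys]; exact: XY.
Qed.

Lemma indep_set_chain (F : A -> Prop) (Fam : (A -> Prop) -> Prop) :
  (forall X, Fam X -> indep_set F X) ->
  (forall X Y, Fam X -> Fam Y -> (forall z, X z -> Y z) \/ (forall z, Y z -> X z)) ->
  indep_set F (fun x => exists2 X, Fam X & X x).
Proof.
move=> indF chainF n a c ia Ua Fac i.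
have [X [FX Xa]] : exists X, Fam X /\ forall x, x \in [seq a i | i <- enum 'I_n] -> X x.
  apply: chain_mem_seq => //; first by case: (enum 'I_n) (mem_enum 'I_n i).
  by move=> x /mapP [j _ ->]; have [X FX Xa] := Ua j; exists X.
by apply: (indF X FX n a c ia) => // j; apply: Xa; apply: map_f; rewrite mem_enum.
Qed.

(* A dependence involving [x] with a nonzero coefficient would put [x] in the span. *)
Lemma indep_set_add (F T : A -> Prop) x : subspace F -> indep_set F T ->
  ~ spans_mod F T x -> indep_set F (fun y => T y \/ y = x).
Proof.
move=> subF indT nsp n a c ia Ua Fac.
have [[i0 ai0]|nx] := classic (exists i0, a i0 = x); last first.
  by apply: (indT n a c ia) => // i; case: (Ua i) => // axi; case: nx; exists i.
have Tl j : T (a (lift i0 j)).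
  case: (Ua (lift i0 j)) => // /esym; rewrite -ai0 => /ia /eqP.
  by rewrite (negbTE (neq_lift _ _)).
move: Fac; rewrite (bigD1_ord i0) //= ai0 => Fac.
have ci0 : c i0 = 0.
  apply: NNPP => /eqP ci0; apply: nsp.
  exists n.-1, (fun j => a (lift i0 j)), (fun j => - (c i0)^-1 * c (lift i0 j)).
  split => //; have := subspaceZ subF (c i0)^-1 Fac.
  rewrite scalerDr scalerA mulVf // scale1r scaler_sumr -sumrN.
  by move=> Fx; under eq_bigr => j _ do rewrite mulNr scaleNr opprK -scalerA.
have cl j : c (lift i0 j) = 0.
  apply: (indT _ (fun j => a (lift i0 j)) (fun j => c (lift i0 j))) => //.
    by move=> j1 j2 /ia /lift_inj.
  by move: Fac; rewrite ci0 scale0r add0r.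
by move=> i; case: (unliftP i0 i) => [j ->|->].
Qed.

Lemma exists_basis_mod (S F : A -> Prop) : subspace F ->
  exists T, [/\ (forall t, T t -> S t), indep_set F T & forall x, S x -> spans_mod F T x].
Proof.
move=> subF; pose P (X : A -> Prop) := (forall t, X t -> S t) /\ indep_set F X.
have [|T [[TS indT] maxT]] := @classical_sets.Zorn_bigcup A P.
  move=> Fam FamP chainF; split; first by move=> t [X /FamP [XS _] Xt]; apply: XS.
  apply: indep_set_chain => [X /FamP [] //|X Y FX FY].
  by case: (chainF X Y FX FY) => XY; [left | right] => z; apply: XY.
exists T; split => // x Sx; apply: NNPP => nsp.
have nTx : ~ T x.
  move=> Tx; apply: nsp; exists 1, (fun _ => x), (fun _ => 1); split => //.
  by rewrite big_ord1 scale1r subrr; apply: subspace0.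
apply: (maxT (fun y => T y \/ y = x)).
  by split=> [z Tz|TxT]; [left | apply: nTx; apply: (TxT x); right].
split; first by move=> t [/TS|->].
exact: indep_set_add.
Qed.

End BasisModulo.

Section UAlgebras.
Variables (k : fieldType) (A : lmodType k) (br : A -> A -> A).
Hypotheses (lieA : is_lie_algebra br) (metaA : metabelian br).

Local Notation FitA := (Fit br (fun _ => True)).

Lemma torsion_free_indep_mod (S T : A -> Prop) :
  subalgebra br S -> Fit_abelian br S -> basis_mod_Fit br S T -> torsion_free br S T ->
  forall n (a : 'I_n -> A), (forall i, S (a i)) -> indep_mod (Fit br S) a ->
  forall p : {mpoly k[n]}, p != 0 ->
  forall b, Fit br S b -> b <> 0 -> poly_act br a p b <> 0.
Proof.
move=> subalgS FitS_ab [TS _ spT] tfT n a Sa inda p p0 b Fb b0.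
have [m [t [C [it Tt a_tC]]]] := spans_mod_family (fun i => spT _ (Sa i)).
have [D CD1] := row_freeP (indep_mod_row_free (Fit_subspace subalgS) inda a_tC).
have St j : S (t j) by apply/TS/Tt.
rewrite -(poly_act_lin_subst lieA metaA subalgS FitS_ab Sa St a_tC) //.
exact: tfT (lin_subst_eq0 CD1 p0) _ Fb b0.
Qed.

Lemma U_algebra_br_inj (S : A -> Prop) y w : subalgebra br S -> U_algebra br S ->
  S y -> ~ Fit br S y -> Fit br S w -> w <> 0 -> br w y <> 0.
Proof.
move=> subalgS [FitS_ab [T [basT tfT]]] Sy nFy Fw w0.
have Sy1 (i : 'I_1) : S y by [].
rewrite -(poly_act_X lieA metaA subalgS FitS_ab Sy1 ord0 Fw).
apply: (torsion_free_indep_mod subalgS FitS_ab basT tfT Sy1 _ _ Fw w0).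
  move=> c; rewrite big_ord1 => Fcy i; rewrite (ord1 i); apply: NNPP => /eqP c0.
  by apply: nFy; have := subspaceZ (Fit_subspace subalgS) (c ord0)^-1 Fcy;
    rewrite scalerA mulVf ?scale1r.
by rewrite -msize_poly_eq0 msizeX.
Qed.

Lemma U_algebra_abelian (S : A -> Prop) : subalgebra br S ->
  (forall x y, S x -> S y -> br x y = 0) -> U_algebra br S.
Proof.
move=> subalgS abS.
have FitS x : Fit br S x <-> S x.
  split=> [|Sx]; first exact: Fit_sub.
  exact: Fit_nilpotent (ideal_self _) (abelian_nilpotent abS) Sx.
split; first by move=> x y /FitS Sx /FitS Sy; apply: abS.
exists (fun _ => False); split.
  split=> [t []|n a c _ Fa _ i|x Sx]; first by case: (Fa i).
  exists 0%N, (fun _ => 0), (fun _ => 0); split; first by case.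
  by rewrite big_ord0 subr0; apply/FitS.
move=> [|n] a _ Fa p p0 b _ b0; last by case: (Fa ord0).
have c0 : p@_0%MM != 0 by rewrite -(mpolyC_eq0 0) -nvar0_mpolyC.
rewrite (nvar0_mpolyC p) -alg_mpolyC poly_actZ poly_act1 => /eqP.
by rewrite scaler_eq0 (negbTE c0) => /eqP.
Qed.

Section Subalgebra.
Variable B : A -> Prop.
Hypotheses (subalgB : subalgebra br B) (UA : U_algebra br (fun _ => True)).

Lemma Fit_subalgebra u v : B u -> B v -> br u v <> 0 ->
  forall y, Fit br B y <-> B y /\ FitA y.
Proof.
move=> Bu Bv uv0; set z := br u v.
have Bz : B z by case: subalgB => _; apply.
have FAz : FitA z by apply: Fit_br.
have [FitA_ab _] := UA.
have idBFA := idealI subalgB (Fit_ideal (subalgebraT br)).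
move=> y; split; last first.
  move=> BFAy; apply: (Fit_nilpotent idBFA) => //.
  by apply: abelian_nilpotent => x1 x2 [_ FA1] [_ FA2]; apply: FitA_ab.
move: y; apply: (Fit_min idBFA) => I idI nilI y Iy.
have By : B y by case: idI => IB _ _; apply: IB.
split => //; apply: NNPP => nFAy.
have iter_neq0 m : iter m (fun w => br w y) (br z y) <> 0 /\
                   FitA (iter m (fun w => br w y) (br z y)).
  elim: m => [|m [IHm0 IHmF]] /=; last split.
  - split; last exact: Fit_brl.
    by apply: (U_algebra_br_inj (subalgebraT br)).
  - exact: (U_algebra_br_inj (subalgebraT br)).
  - exact: Fit_brl.
have [m iter0] := nilpotent_iter_br lieA idI nilI Iy Bz.
by case: (iter_neq0 m).
Qed.

Lemma U_algebra_subalgebra : U_algebra br B.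
Proof.
have [abB|/not_all_ex_not [u /not_all_ex_not [v nabB]]] :=
  classic (forall x y, B x -> B y -> br x y = 0); first exact: U_algebra_abelian.
have [Bu [Bv uv0]] : B u /\ B v /\ br u v <> 0.
  by apply: NNPP => nuv; apply: nabB => Bu Bv; apply: NNPP => uv0; apply: nuv.
have FitB := Fit_subalgebra Bu Bv uv0.
have [FitA_ab [T [basT tfT]]] := UA.
split; first by move=> x y /FitB [_ FAx] /FitB [_ FAy]; apply: FitA_ab.
have [TB [TBB indTB spTB]] := exists_basis_mod B (Fit_subspace subalgB).
exists TB; split=> // n a ia TBa p p0 b /FitB [_ FAb] b0.
apply: (torsion_free_indep_mod (subalgebraT br) FitA_ab basT tfT (fun=> Logic.I)) => //.
move=> c FAc; apply: (indTB n a c ia TBa); apply/FitB; split => //.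
by apply: (subspace_lin (proj1 subalgB)) => i; apply/TBB/TBa.
Qed.

End Subalgebra.
End UAlgebras.

Section FinitelyGenerated.
Variables (k : fieldType) (A : lmodType k) (br : A -> A -> A).
Hypotheses (lieA : is_lie_algebra br) (metaA : metabelian br).

Local Notation FitA := (Fit br (fun _ => True)).
Local Notation gen := (gen_subalgebra br).

Definition annihilates_sq (y : A) := forall c d, br (br c d) y = 0.

Lemma annihilates_sq_ideal : ideal br (fun _ => True) annihilates_sq.
Proof.
split=> //; last by move=> x y _ _; split=> c d; apply: metaA.
split=> [c d|x y Ax Ay c d|c' x Ax c d]; first exact: br0r.
  by rewrite (brDr lieA) Ax Ay addr0.
by rewrite (brZr lieA) Ax scaler0.
Qed.

Hypothesis fgU : forall s, U_algebra br (gen s).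
Variables u0 v0 : A.
Hypothesis uv0 : br u0 v0 <> 0.

Lemma Fit_gen_br_uv s y : u0 \in s -> v0 \in s -> gen s y ->
  ~ Fit br (gen s) y -> br (br u0 v0) y <> 0.
Proof.
move=> u0s v0s gy nFy; have subalg_s := gen_subalgebra_subalgebra br s.
apply: (U_algebra_br_inj lieA metaA subalg_s (fgU s) gy nFy) => //.
by apply: Fit_br => //; apply: gen_subalgebra_mem.
Qed.

Lemma Fit_gen_annihilates_sq s y : u0 \in s -> v0 \in s -> gen s y ->
  annihilates_sq y -> Fit br (gen s) y.
Proof.
by move=> u0s v0s gy ann_y; apply: NNPP => /(Fit_gen_br_uv u0s v0s gy); apply.
Qed.

Lemma annihilates_sq_Fit_gen s y : u0 \in s -> v0 \in s ->
  Fit br (gen s) y -> annihilates_sq y.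
Proof.
move=> u0s v0s Fy c d; pose s' := [:: c, d & s].
have ss' : {subset s <= s'} by move=> x xs; rewrite !inE xs !orbT.
have subalg_s := gen_subalgebra_subalgebra br s.
have subalg_s' := gen_subalgebra_subalgebra br s'.
have Fy' : Fit br (gen s') y.
  apply: NNPP => /(Fit_gen_br_uv (ss' _ u0s) (ss' _ v0s)); apply.
    by apply: (gen_subalgebra_sub ss'); apply: Fit_sub Fy.
  have [FitS_ab _] := fgU s; apply: FitS_ab => //.
  by apply: Fit_br => //; apply: gen_subalgebra_mem.
have [FitS'_ab _] := fgU s'; apply: FitS'_ab => //.
by apply: Fit_br => //; apply: gen_subalgebra_mem; rewrite !inE eqxx ?orbT.
Qed.

Lemma Fit_annihilates_sq y : FitA y <-> annihilates_sq y.
Proof.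
have ann_ab x1 x2 : annihilates_sq x1 -> annihilates_sq x2 -> br x1 x2 = 0.
  move=> ann1 ann2; pose s := [:: x1; x2; u0; v0].
  have [FitS_ab _] := fgU s.
  by apply: FitS_ab; apply: Fit_gen_annihilates_sq => //;
    rewrite ?inE ?eqxx ?orbT //; apply: gen_subalgebra_mem; rewrite !inE eqxx ?orbT.
split; last first.
  by move=> ann_y; apply: (Fit_nilpotent annihilates_sq_ideal (abelian_nilpotent ann_ab)).
move: y; apply: (Fit_min annihilates_sq_ideal) => I idI nilI y Iy c d.
pose s := [:: y; c; d; u0; v0]; have subalg_s := gen_subalgebra_subalgebra br s.
have [FitS_ab _] := fgU s.
have Fy : Fit br (gen s) y.
  apply: (Fit_nilpotent (idealI subalg_s idI)); first by apply: nilpotent_sub nilI => x [].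
  by split => //; apply: gen_subalgebra_mem; rewrite inE eqxx.
by apply: FitS_ab => //; apply: Fit_br => //; apply: gen_subalgebra_mem; rewrite !inE eqxx ?orbT.
Qed.

Lemma U_algebra_of_fg_nonabelian : U_algebra br (fun _ => True).
Proof.
split=> [x y /Fit_annihilates_sq ann_x /Fit_annihilates_sq ann_y|].
  pose s := [:: x; y; u0; v0]; have [FitS_ab _] := fgU s.
  by apply: FitS_ab; apply: Fit_gen_annihilates_sq => //;
    rewrite ?inE ?eqxx ?orbT //; apply: gen_subalgebra_mem; rewrite !inE eqxx ?orbT.
have [T [_ indT spT]] := exists_basis_mod (fun _ => True) (Fit_subspace (subalgebraT br)).
exists T; split=> // n a ia Ta p p0 b /Fit_annihilates_sq ann_b b0.
pose s := [seq a i | i <- enum 'I_n] ++ [:: b; u0; v0].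
have [u0s v0s] : u0 \in s /\ v0 \in s by rewrite !mem_cat !inE !eqxx !orbT.
have [FitS_ab [TS [basS tfS]]] := fgU s.
have gsa i : gen s (a i).
  by apply: gen_subalgebra_mem; rewrite mem_cat map_f ?mem_enum.
apply: (torsion_free_indep_mod lieA metaA (gen_subalgebra_subalgebra br s)
          FitS_ab basS tfS gsa) => //.
- move=> c /(annihilates_sq_Fit_gen u0s v0s) /Fit_annihilates_sq.
  exact: indT n a c ia Ta.
- apply: Fit_gen_annihilates_sq => //.
  by apply: gen_subalgebra_mem; rewrite mem_cat !inE eqxx orbT.
Qed.

End FinitelyGenerated.

Lemma U_algebra_of_fg (k : fieldType) (A : lmodType k) (br : A -> A -> A) :
  is_lie_algebra br -> metabelian br ->
  (forall s, U_algebra br (gen_subalgebra br s)) -> U_algebra br (fun _ => True).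
Proof.
move=> lieA metaA fgU.
have [abA|/not_all_ex_not [u /not_all_ex_not [v uv0]]] := classic (forall x y : A, br x y = 0).
  by apply: U_algebra_abelian => // x y _ _; apply: abA.
exact: U_algebra_of_fg_nonabelian uv0.
Qed.

Theorem theorem3p2p3 (k : fieldType) (A : lmodType k) (br : A -> A -> A) :
  is_lie_algebra br -> metabelian br ->
  (U_algebra br (fun _ => True) <->
   forall s : seq A, U_algebra br (gen_subalgebra br s)).
Proof.
move=> lieA metaA; split=> [UA s|]; last exact: U_algebra_of_fg.
exact: U_algebra_subalgebra (gen_subalgebra_subalgebra br s) UA.
Qed.
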